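(* Let $\Gamma_1,\Gamma_2$ be finite pseudoreflection groups acting on $\mathbb C^n$ with $\Gamma_2=P\Gamma_1P^{-1}$ for some invertible linear map $P$ of $\mathbb C^n$. Suppose that a domain $D\subset\mathbb C^n$ is invariant under $\Gamma_1$ and that $P$ restricts to an automorphism of $D$. Let $\theta_j$ be a basic polynomial map associated to $\Gamma_j$, $j=1,2$. Then the proper holomorphic maps $\theta_1:D\to\theta_1(D)$ and $\theta_2:D\to\theta_2(D)$ are isomorphic.
   Context: A pseudoreflection on $\mathbb C^n$ is a linear map $\rho$ of finite order with ${\rm rank}({\sf id}_n-\rho)=1$; a pseudoreflection group is a finite group generated by pseudoreflections. By the Chevalley–Shephard–Todd theorem, the ring of $\Gamma$-invariant polynomials equals $\mathbb C[\theta_1,\dots,\theta_n]$ for algebraically independent homogeneous polynomials $\theta_i$; the map $\theta=(\theta_1,\dots,\theta_n)$ is called a basic polynomial map associated to $\Gamma$. Two proper holomorphic maps $\pi_j:D_j\to G_j$ ($j=1,2$) are isomorphic if there are biholomorphisms $a:D_1\to D_2$ and $b:G_1\to G_2$ with $b\circ\pi_1=\pi_2\circ a$. *)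

From HB Require Import structures.
From mathcomp Require Import all_boot all_order all_algebra.
From mathcomp Require Import complex.
From mathcomp Require Import mpoly.
From mathcomp Require Import all_classical all_reals all_analysis.
Set Implicit Arguments. Unset Strict Implicit. Unset Printing Implicit Defensive.
Import Order.TTheory GRing.Theory Num.Theory.
Import numFieldTopology.Exports numFieldNormedType.Exports.
Local Open Scope classical_set_scope.
Local Open Scope ring_scope.

(* Points of C^n are column vectors 'cV[C]_n; a linear map of C^n is a square
   matrix A acting by x |-> A *m x.  Here C := R[i] for a realType R. *)

Section Defs.
Variable R : realType.
Local Notation C := (R[i]).
Variable n : nat.

Definition Cn : normedModType C := 'cV[C]_n.

Definition pseudoreflection (A : 'M[C]_n) : Prop :=
  (exists k : nat, (0 < k)%N /\ A ^+ k = 1%:M) /\ \rank (1%:M - A) = 1%N.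

Definition finite_linear_group (G : seq 'M[C]_n) : Prop :=
  [/\ 1%:M \in G,
      (forall g h, g \in G -> h \in G -> g *m h \in G),
      (forall g, g \in G -> g \in unitmx) &
      (forall g, g \in G -> invmx g \in G)].

Definition pseudoreflection_group (G : seq 'M[C]_n) : Prop :=
  finite_linear_group G /\
  forall g, g \in G ->
    exists s : seq 'M[C]_n,
      (forall r, r \in s -> r \in G /\ pseudoreflection r) /\
      g = foldr mulmx 1%:M s.

(* the linear substitution x |-> g x on polynomials: X_i |-> sum_j g_ij X_j *)
Definition lin_subst (g : 'M[C]_n) : n.-tuple (mpoly.mpoly n C) :=
  [tuple \sum_(j < n) g i j *: mpoly.mpolyX C (mpoly.mnm1 j) | i < n].

Definition invariant_poly (G : seq 'M[C]_n) (p : mpoly.mpoly n C) : Prop :=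
  forall g, g \in G -> mpoly.comp_mpoly (lin_subst g) p = p.

Definition basic_polynomial_map (G : seq 'M[C]_n)
    (theta : n.-tuple (mpoly.mpoly n C)) : Prop :=
  [/\ (forall i, tnth theta i \is mpoly.ishomog mpoly.mdeg),
      (forall q : mpoly.mpoly n C, mpoly.comp_mpoly theta q = 0 -> q = 0) &
      (forall p, invariant_poly G p <->
                 exists q : mpoly.mpoly n C, p = mpoly.comp_mpoly theta q)].

Definition poly_map (theta : n.-tuple (mpoly.mpoly n C)) (x : Cn)
  : Cn :=
  \col_(i < n) mpoly.meval (fun j => x j ord0) (tnth theta i).

(* holomorphic on U: complex (Frechet) differentiable at every point of U *)
Definition holomorphic_on (U : set Cn) (f : Cn -> Cn) : Prop :=
  forall x, U x -> differentiable f x.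

Definition biholomorphism (U V : set Cn) (f : Cn -> Cn) : Prop :=
  [/\ holomorphic_on U f, (forall x, U x -> V (f x)) &
      exists g : Cn -> Cn,
        [/\ holomorphic_on V g, (forall y, V y -> U (g y)),
            (forall x, U x -> g (f x) = x) & (forall y, V y -> f (g y) = y)]].

Definition isomorphic_maps (D1 G1 : set Cn) (pi1 : Cn -> Cn)
    (D2 G2 : set Cn) (pi2 : Cn -> Cn) : Prop :=
  exists a b : Cn -> Cn,
    [/\ biholomorphism D1 D2 a, biholomorphism G1 G2 b &
        forall x, D1 x -> b (pi1 x) = pi2 (a x)].

Definition domain (D : set Cn) : Prop :=
  [/\ D !=set0, open D & connected D].

End Defs.

(* Since Gamma2 = P Gamma1 P^-1, each component of theta2 o P is a
   Gamma1-invariant polynomial, hence a polynomial in theta1: theta2 o P =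
   phi o theta1 for a polynomial map phi.  Symmetrically theta1 o P^-1 =
   psi o theta2, and then psi o phi o theta1 = psi o theta2 o P = theta1, so
   phi : theta1(D) -> theta2(D) is biholomorphic with inverse psi, and
   (a, b) = (P, phi) is the required isomorphism. *)

From HB Require Import structures.
From mathcomp Require Import all_boot all_order all_algebra.
From mathcomp Require Import complex.
From mathcomp Require Import mpoly.
From mathcomp Require Import all_classical all_reals all_analysis.
Import Order.TTheory GRing.Theory Num.Theory.
Import numFieldTopology.Exports numFieldNormedType.Exports.
Local Open Scope classical_set_scope.
Local Open Scope ring_scope.

Set Implicit Arguments.
Unset Strict Implicit. Unset Printing Implicit Defensive.

Section BasicPolynomialMaps.
Variable R : realType.
Local Notation C := (R[i]).
Variable n : nat.
Implicit Types (G H : seq 'M[C]_n) (M : 'M[C]_n) (x : Cn R n).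
Implicit Types (theta : n.-tuple {mpoly C[n]}) (p : {mpoly C[n]}).

Lemma comp_lin_subst (A B : 'M[C]_n) p :
  comp_mpoly (lin_subst A) (comp_mpoly (lin_subst B) p) =
  comp_mpoly (lin_subst (B *m A)) p.
Proof.
rewrite [comp_mpoly (lin_subst B) p]comp_mpolyEX [RHS]comp_mpolyEX raddf_sum /=.
apply: eq_bigr => m _; rewrite linearZ /= !comp_mpolyX rmorph_prod /=.
congr (_ *: _); apply: eq_bigr => i _; rewrite rmorphXn /=; congr (_ ^+ _).
rewrite !tnth_mktuple raddf_sum /=.
under eq_bigr do
  rewrite linearZ /= comp_mpolyXU -tnth_nth tnth_mktuple scaler_sumr.
rewrite exchange_big /=; apply: eq_bigr => k _; rewrite mxE scaler_suml.
by apply: eq_bigr => j _; rewrite scalerA.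
Qed.

Lemma invariant_poly_lin_subst G H M p :
  (forall h, h \in H -> exists2 g, g \in G & M *m h = g *m M) ->
  invariant_poly G p -> invariant_poly H (comp_mpoly (lin_subst M) p).
Proof.
move=> MHG invp h hH; have [g gG MhE] := MHG h hH.
by rewrite comp_lin_subst MhE -comp_lin_subst invp.
Qed.

Lemma basic_polynomial_map_invariant G theta k :
  basic_polynomial_map G theta -> invariant_poly G (tnth theta k).
Proof.
by case=> _ _ gen; apply/gen; exists 'X_k; rewrite comp_mpolyXU -tnth_nth.
Qed.

Definition coords x : 'I_n -> C := fun j => x j ord0.

Lemma poly_mapE theta x k j :
  poly_map theta x k j = (tnth theta k).@[coords x].
Proof. by rewrite mxE. Qed.

Lemma meval_lin_subst M p x :
  (comp_mpoly (lin_subst M) p).@[coords x] = p.@[coords (M *m x)].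
Proof.
rewrite comp_mpoly_meval; apply: meval_eq => j.
rewrite tnth_mktuple raddf_sum /= /coords mxE; apply: eq_bigr => k _.
by rewrite mevalZ mevalXU.
Qed.

Lemma meval_comp_poly_map theta p x :
  (comp_mpoly theta p).@[coords x] = p.@[coords (poly_map theta x)].
Proof.
by rewrite comp_mpoly_meval; apply: meval_eq => j; rewrite /coords poly_mapE.
Qed.

Lemma poly_map_intertwining G H M theta theta' :
  (forall h, h \in H -> exists2 g, g \in G & M *m h = g *m M) ->
  (forall k, invariant_poly G (tnth theta' k)) ->
  (forall p, invariant_poly H p -> exists q, p = comp_mpoly theta q) ->
  exists phi : n.-tuple {mpoly C[n]},
    forall x, poly_map phi (poly_map theta x) = poly_map theta' (M *m x).
Proof.
move=> MHG inv' gen.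
have qex k : exists q,
    comp_mpoly (lin_subst M) (tnth theta' k) = comp_mpoly theta q.
  exact/gen/(invariant_poly_lin_subst MHG).
have [q qE] := choice qex.
exists [tuple q k | k < n] => x; apply/matrixP => k j.
by rewrite !poly_mapE tnth_mktuple -meval_comp_poly_map -qE meval_lin_subst.
Qed.

End BasicPolynomialMaps.

Section Holomorphy.
Variable R : realType.
Local Notation C := (R[i]).
Variable n : nat.
Local Notation V := (Cn R n).

Lemma differentiable_big_sum (W : normedModType C) (I : Type) (s : seq I)
    (F : I -> V -> W) x :
  (forall i, differentiable (F i) x) ->
  differentiable (fun y => \sum_(i <- s) F i y) x.
Proof.
move=> dF; rewrite -fct_sumE.
by elim/big_ind: _ => // f g df dg; apply: differentiableD.
Qed.

Lemma differentiable_big_prod (I : Type) (s : seq I) (F : I -> V -> C^o) x :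
  (forall i, differentiable (F i) x) ->
  differentiable (fun y => \prod_(i <- s) F i y) x.
Proof.
move=> dF; rewrite -fct_prodE.
by elim/big_ind: _ => // f g df dg; apply: differentiableM.
Qed.

Lemma differentiable_expr (f : V -> C^o) k x :
  differentiable f x -> differentiable (f ^+ k) x.
Proof.
move=> df; elim: k => [|k IH]; last by rewrite exprS; apply: differentiableM.
by rewrite expr0; apply: differentiable_cst.
Qed.

Lemma differentiable_meval (p : {mpoly C[n]}) x :
  differentiable (fun y : V => p.@[coords y] : C^o) x.
Proof.
under eq_fun do rewrite mevalE.
apply: differentiable_big_sum => m; apply: differentiableM.
  exact: differentiable_cst.
apply: differentiable_big_prod => i; rewrite -exprfctE.
by apply: differentiable_expr; apply: differentiable_coord.
Qed.

Lemma differentiable_col (f : V -> V) x :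
  (forall i, differentiable (fun y => f y i ord0 : C^o) x) ->
  differentiable f x.
Proof.
move=> df.
have -> : f = fun y => \sum_(i < n) f y i ord0 *: (delta_mx i ord0 : V).
  apply/funext => y; rewrite [LHS]matrix_sum_delta.
  by apply: eq_bigr => i _; rewrite big_ord1.
by apply: differentiable_big_sum => i; apply: differentiableZl.
Qed.

Lemma differentiable_poly_map (theta : n.-tuple {mpoly C[n]}) x :
  differentiable (poly_map theta) x.
Proof.
apply: differentiable_col => i.
under eq_fun do rewrite poly_mapE.
exact: differentiable_meval.
Qed.

Lemma differentiable_mulmx (M : 'M[C]_n) x :
  differentiable (mulmx M : V -> V) x.
Proof.
apply: differentiable_col => i; under eq_fun do rewrite mxE.
apply: differentiable_big_sum => j; apply: differentiableM.
  exact: differentiable_cst.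
exact: differentiable_coord.
Qed.

End Holomorphy.

Section Isomorphism.
Variable R : realType.
Variable n : nat.
Variables (D : set (Cn R n)) (P : 'M[R[i]]_n).
Hypotheses (P_unit : P \in unitmx) (PD : mulmx P @` D = D).

Lemma mulmx_mapsto x : D x -> D (P *m x).
Proof. by move=> Dx; rewrite -PD; exists x. Qed.

Lemma invmx_mapsto y : D y -> D (invmx P *m y).
Proof. by rewrite -{1}PD => -[x Dx <-]; rewrite mulKmx. Qed.

Lemma biholomorphism_mulmx : biholomorphism D D (mulmx P).
Proof.
split; first by move=> x _; apply: differentiable_mulmx.
  exact: mulmx_mapsto.
exists (mulmx (invmx P)); split.
- by move=> y _; apply: differentiable_mulmx.
- exact: invmx_mapsto.
- by move=> x _; rewrite mulKmx.
- by move=> y _; rewrite mulKVmx.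
Qed.

Lemma isomorphic_poly_maps (theta1 theta2 phi psi : n.-tuple {mpoly R[i][n]}) :
  (forall x, poly_map phi (poly_map theta1 x) = poly_map theta2 (P *m x)) ->
  (forall y,
     poly_map psi (poly_map theta2 y) = poly_map theta1 (invmx P *m y)) ->
  isomorphic_maps D (poly_map theta1 @` D) (poly_map theta1)
                  D (poly_map theta2 @` D) (poly_map theta2).
Proof.
move=> phiE psiE; exists (mulmx P), (poly_map phi); split.
- exact: biholomorphism_mulmx.
- split; first by move=> z _; apply: differentiable_poly_map.
    move=> _ [x Dx <-]; rewrite phiE.
    by exists (P *m x) => //; apply: mulmx_mapsto.
  exists (poly_map psi); split.
  + by move=> z _; apply: differentiable_poly_map.
  + move=> _ [y Dy <-]; rewrite psiE.
    by exists (invmx P *m y) => //; apply: invmx_mapsto.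
  + by move=> _ [x Dx <-]; rewrite phiE psiE mulKmx.
  + by move=> _ [y Dy <-]; rewrite psiE phiE mulKVmx.
- by move=> x _; rewrite phiE.
Qed.

End Isomorphism.

Theorem proposition2p11 (R : realType) (n : nat)
    (G1 G2 : seq 'M[R[i]]_n) (P : 'M[R[i]]_n) (D : set (Cn R n))
    (theta1 theta2 : n.-tuple (mpoly.mpoly n R[i])) :
  pseudoreflection_group G1 ->
  pseudoreflection_group G2 ->
  P \in unitmx ->
  G2 =i [seq P *m g *m invmx P | g <- G1] ->
  domain D ->
  (forall g x, g \in G1 -> D x -> D (g *m x)) ->
  (fun x => P *m x) @` D = D ->
  basic_polynomial_map G1 theta1 ->
  basic_polynomial_map G2 theta2 ->
  isomorphic_maps D (poly_map theta1 @` D) (poly_map theta1)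
                  D (poly_map theta2 @` D) (poly_map theta2).
Proof.
move=> _ _ P_unit G2E _ _ PD basic1 basic2.
have [phi phiE] : exists phi : n.-tuple {mpoly R[i][n]},
    forall x, poly_map phi (poly_map theta1 x) = poly_map theta2 (P *m x).
  apply: (poly_map_intertwining (G := G2) (H := G1)).
  - move=> h hG1; exists (P *m h *m invmx P); last by rewrite mulmxKV.
    by rewrite G2E; apply: map_f.
  - by move=> k; apply: basic_polynomial_map_invariant basic2.
  - by case: basic1 => _ _ gen1 p /gen1.
have [psi psiE] : exists psi : n.-tuple {mpoly R[i][n]},
    forall y, poly_map psi (poly_map theta2 y) = poly_map theta1 (invmx P *m y).
  apply: (poly_map_intertwining (G := G1) (H := G2)).
  - move=> h; rewrite G2E => /mapP [g gG1 ->]; exists g => //.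
    by rewrite !mulmxA mulVmx // mul1mx.
  - by move=> k; apply: basic_polynomial_map_invariant basic1.
  - by case: basic2 => _ _ gen2 p /gen2.
exact: (isomorphic_poly_maps P_unit PD phiE psiE).
Qed.
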